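(* Let $\mathcal{C}\subseteq\mathbb{F}_q^n$ be a code with $(r,\delta)$-locality. Let $\mathcal{S}\subseteq[n]$ and let $\Delta$ be a positive integer with $\Delta\le|\mathcal{S}|$. Then there exist subsets $\mathcal{A},\mathcal{T}\subseteq[n]$ such that $$\mathcal{A}\subseteq\mathcal{S}\cap\mathcal{T},\qquad |\mathcal{A}|=(\delta-1)\left\lfloor\frac{\Delta}{r+\delta-1}\right\rfloor,\qquad |\mathcal{S}\cap\mathcal{T}|\le\Delta,$$ and $\mathcal{C}|_{\mathcal{T}}$ is generated by $\mathcal{C}|_{\mathcal{T}\setminus\mathcal{A}}$, i.e., there is a map $\psi$ with $c|_{\mathcal{T}}=\psi(c|_{\mathcal{T}\setminus\mathcal{A}})$ for every $c\in\mathcal{C}$.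
   Context: $[n]=\{1,\dots,n\}$; for $\mathcal{X}\subseteq[n]$, $c|_{\mathcal{X}}$ is the restriction of $c$ to coordinates in $\mathcal{X}$ and $\mathcal{C}|_{\mathcal{X}}=\{c|_{\mathcal{X}}:c\in\mathcal{C}\}$. A code $\mathcal{C}\subseteq\mathbb{F}_q^n$ has $(r,\delta)$-locality (with $r\ge1$, $\delta\ge 2$) if every coordinate $i\in[n]$ lies in a subset $J_i\subseteq[n]$ with $|J_i|\le r+\delta-1$ such that $\mathcal{C}|_{J_i}$ has minimum distance at least $\delta$. *)

From mathcomp Require Import all_boot all_algebra.
Set Implicit Arguments. Unset Strict Implicit. Unset Printing Implicit Defensive.

(* Codewords of length n over F are finite functions 'I_n -> F
   (coordinates are 0-based: 'I_n stands for [n]). *)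
Definition word (F : finFieldType) (n : nat) := {ffun 'I_n -> F}.

(* Restriction c|_X, represented by zero-padding outside X; this is an
   injective encoding of the tuple (c_i)_{i in X}. *)
Definition restr (F : finFieldType) (n : nat) (X : {set 'I_n}) (c : word F n)
  : word F n := [ffun i => if i \in X then c i else 0%R].

Definition dist_on (F : finFieldType) (n : nat) (X : {set 'I_n}) (c c' : word F n)
  : nat := #|[set i in X | c i != c' i]|.

Definition min_dist_ge (F : finFieldType) (n : nat) (C : {set word F n})
  (X : {set 'I_n}) (d : nat) : Prop :=
  forall c c', c \in C -> c' \in C -> restr X c != restr X c' ->
    d <= dist_on X c c'.

Definition has_locality (F : finFieldType) (n : nat) (C : {set word F n})
  (r delta : nat) : Prop :=
  forall i : 'I_n, exists J : {set 'I_n},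
    [/\ i \in J, #|J| <= r + delta - 1 & min_dist_ge C J delta].

From mathcomp Require Import all_boot all_algebra.
From mathcomp Require Import zify.

Set Implicit Arguments.
Unset Strict Implicit.
Unset Printing Implicit Defensive.

(* Let d = delta - 1 and k = Delta %/ (r + d). The sets T and A are grown greedily
   while keeping T determined by T :\: A on C. As long as S is not covered by T,
   take i in S :\: T and its local group J, and let W be up to d fresh points of
   S :&: J outside T: since C|_J has distance d + 1, erasing W from J loses
   nothing, so J :\: W can be added to T and any subset B of W to A. Choosing |B|
   so that |A| never passes a multiple of d, every round of d new points of A
   costs at most r + d points of S, i.e. |S :&: T| <= |A| + r * (|A| %/ d);
   the construction stops at |A| = d * k with |S :&: T| <= (r + d) * k <= Delta. *)

Lemma exists_subset_card (T : finType) (U : {set T}) k :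
  k <= #|U| -> exists2 B : {set T}, B \subset U & #|B| = k.
Proof.
case/card_geqP=> s [uniq_s <- sU]; exists [set x in s].
  by apply/subsetP=> x; rewrite inE => /sU.
by rewrite cardsE; apply/card_uniqP.
Qed.

Lemma addn_subn_modn a d : 0 < d -> a + (d - a %% d) = (a %/ d).+1 * d.
Proof.
move=> d_gt0; rewrite {1}(divn_eq a d) -addnA subnKC ?mulSnr //.
exact/ltnW/ltn_pmod.
Qed.

Section Determination.
Variables (F : finFieldType) (n : nat) (C : {set word F n}).

Definition agree_on (X : {set 'I_n}) (c c' : word F n) :=
  {in X, forall i, c i = c' i}.

Definition determines (X Y : {set 'I_n}) :=
  forall c c', c \in C -> c' \in C -> agree_on X c c' -> agree_on Y c c'.

Lemma determinesS (X X' Y Y' : {set 'I_n}) :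
  X \subset X' -> Y' \subset Y -> determines X Y -> determines X' Y'.
Proof.
move=> /subsetP sXX' /subsetP sY'Y detXY c c' cC c'C agX i /sY'Y.
by apply: detXY => // j /sXX'; apply: agX.
Qed.

Lemma determines_trans (X Y Z : {set 'I_n}) :
  determines X Y -> determines (X :|: Y) Z -> determines X (Y :|: Z).
Proof.
move=> detXY detXYZ c c' cC c'C agX.
have agY := detXY _ _ cC c'C agX.
have agZ : agree_on Z c c'.
  by apply: detXYZ => // i; rewrite inE => /orP[/agX|/agY].
by move=> i; rewrite inE => /orP[/agY|/agZ].
Qed.

Lemma min_dist_determines (J W : {set 'I_n}) d :
  min_dist_ge C J d.+1 -> #|W| <= d -> determines (J :\: W) J.
Proof.
move=> mdJ cardW c c' cC c'C agJW.
suff /ffunP eqJ : restr J c = restr J c'.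
  by move=> i iJ; have := eqJ i; rewrite !ffunE iJ.
apply: contraTeq cardW => neqJ; rewrite -ltnNge.
apply: leq_trans (mdJ _ _ cC c'C neqJ) _; apply: subset_leq_card.
apply/subsetP=> i; rewrite inE => /andP[iJ]; apply: contraR => iW.
by apply/eqP/agJW; rewrite inE iW.
Qed.

Lemma determines_restr (X Y : {set 'I_n}) : determines X Y ->
  exists psi : word F n -> word F n,
    forall c, c \in C -> restr Y c = psi (restr X c).
Proof.
move=> detXY.
exists (fun w => if [pick c in C | restr X c == w] is Some c0
                 then restr Y c0 else w).
move=> c cC; case: pickP => [c0 /andP[c0C /eqP eqX]|/(_ c)]; last first.
  by rewrite cC eqxx.
apply/ffunP => i; rewrite !ffunE; case: ifP => // iY.
apply: (detXY c c0) => // j jX.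
by have := congr1 (fun w : word F n => w j) eqX; rewrite !ffunE jX => ->.
Qed.

Lemma determines_extend d (T A J W B : {set 'I_n}) :
  A \subset T -> [disjoint W & T] -> B \subset W -> #|W| <= d ->
  min_dist_ge C J d.+1 -> determines (T :\: A) T ->
  determines ((T :|: J :\: (W :\: B)) :\: (A :|: B)) (T :|: J :\: (W :\: B)).
Proof.
move=> /subsetP sAT disjWT /subsetP sBW cardW mdJ detT.
have WnT i : i \in W -> i \notin T by move/(disjointFr disjWT)=> ->.
set X := _ :\: _.
have detXT : determines X T.
  apply: determinesS detT => //; apply/subsetP=> i; rewrite !inE.
  case/andP=> iNA iT; rewrite iT (negbTE iNA) /= andbT.
  by apply: contraTN iT => /sBW; apply: WnT.
have detXTJ : determines (X :|: T) J.
  apply: determinesS (min_dist_determines mdJ cardW) => //.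
  apply/subsetP=> i; rewrite !inE => /andP[iNW iJ].
  case iT: (i \in T); rewrite ?orbT //=.
  have iNA : i \notin A by apply: contraFN iT => /sAT.
  have iNB : i \notin B by apply: contraNN iNW => /sBW.
  by rewrite (negbTE iNA) (negbTE iNB) (negbTE iNW) iJ andbF.
apply: determinesS (determines_trans detXT detXTJ) => //.
by apply: setUS; apply: subsetDl.
Qed.

End Determination.

Lemma card_extend (I : finType) (S T J W B : {set I}) :
  W \subset S :&: J :\: T -> B \subset W ->
  #|S :&: (T :|: J :\: (W :\: B))| <=
    #|S :&: T| + (#|S :&: J :\: T| - #|W|) + #|B|.
Proof.
move=> sWU sBW.
have sWBU : W :\: B \subset S :&: J :\: T := subset_trans (subsetDl _ _) sWU.
have -> : S :&: (T :|: J :\: (W :\: B)) =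
          S :&: T :|: (S :&: J :\: T) :\: (W :\: B).
  apply/setP=> i; rewrite !inE.
  by case: (i \in S); case: (i \in T); case: (i \in J);
     case: (i \in W); case: (i \in B).
apply: leq_trans (leq_card_setU _ _).1 _.
rewrite (cardsDS sWBU) (cardsDS sBW).
have := subset_leq_card sWU; have := subset_leq_card sBW; lia.
Qed.

Lemma greedy_cost_bound r d s a u w b : 0 < d ->
  s <= a + r * (a %/ d) -> u <= r + d ->
  w = minn u d -> b = minn (d - a %% d) w ->
  s + (u - w) + b <= a + b + r * ((a + b) %/ d).
Proof.
move=> d_gt0 le_s le_u -> ->; case: (leqP u d) => [_ | lt_du].
  rewrite subnn addn0 addnAC leq_add2r (leq_trans le_s) //.
  by rewrite leq_add2l; apply/leq_mul/leq_div2r/leq_addr.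
have /minn_idPl -> := leq_subr (a %% d) d.
have -> : (a + (d - a %% d)) %/ d = (a %/ d).+1 by rewrite addn_subn_modn ?mulnK.
rewrite mulnS.
have le_ud : u - d <= r by rewrite leq_subLR addnC.
apply: leq_trans (leq_add (leq_add le_s le_ud) (leqnn _)) _.
by rewrite -!addnA leq_add2l addnC addnA [r + (d - _)]addnC.
Qed.

Section Greedy.
Variables (F : finFieldType) (n r d : nat) (C : {set word F n}) (S : {set 'I_n}).
Hypothesis d_gt0 : 0 < d.
Hypothesis loc : has_locality C r d.+1.

Definition greedy_inv (T A : {set 'I_n}) :=
  [/\ A \subset S :&: T, determines C (T :\: A) T &
      #|S :&: T| <= #|A| + r * (#|A| %/ d)].

Lemma greedy_inv0 : greedy_inv set0 set0.
Proof. by split; rewrite ?sub0set ?setI0 ?cards0 // => c c' _ _ _ i; rewrite inE. Qed.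

Lemma greedy_step T A : greedy_inv T A -> ~~ (S \subset T) ->
  exists T' A',
    [/\ greedy_inv T' A', #|A| < #|A'| & #|A'| <= (#|A| %/ d).+1 * d].
Proof.
case=> sAST detT cardST /subsetPn[i iS iNT].
have [J [iJ cardJ mdJ]] := loc i; rewrite addnS subn1 /= in cardJ.
set U := S :&: J :\: T.
have [W sWU cardW] := exists_subset_card (geq_minl #|U| d).
set a := #|A|.
have [B sBW cardB] := exists_subset_card (geq_minr (d - a %% d) #|W|).
have disjWT : [disjoint W & T].
  by apply: disjointWl sWU _; rewrite -setI_eq0 /U setDE setIAC -setIA setICr setI0.
have sAT : A \subset T := subset_trans sAST (subsetIr _ _).
have disjAB : [disjoint A & B].
  by rewrite disjoint_sym (disjointW sBW sAT).
have cardAB : #|A :|: B| = a + #|B| by rewrite cardsU disjoint_setI0 // cards0 subn0.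
have B_gt0 : 0 < #|B|.
  have U_gt0 : 0 < #|U| by apply/card_gt0P; exists i; rewrite !inE iS iJ iNT.
  by rewrite cardB cardW !leq_min subn_gt0 ltn_pmod // U_gt0 d_gt0.
have cardB_le : a + #|B| <= (a %/ d).+1 * d.
  by rewrite -addn_subn_modn // leq_add2l cardB geq_minl.
exists (T :|: J :\: (W :\: B)), (A :|: B); rewrite cardAB.
split => //; last by rewrite -{1}[a]addn0 ltn_add2l.
split.
- rewrite subUset (subset_trans sAST) ?setIS ?subsetUl //=.
  apply/subsetP=> x xB; have := subsetP sWU x (subsetP sBW x xB).
  by rewrite !inE xB /= => /and3P[_ -> ->]; rewrite orbT.
- have cardWd : #|W| <= d by rewrite cardW geq_minr.
  exact: determines_extend sAT disjWT sBW cardWd mdJ detT.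
- have sUJ : U \subset J := subset_trans (subsetDl _ _) (subsetIr S J).
  have cardU : #|U| <= r + d := leq_trans (subset_leq_card sUJ) cardJ.
  rewrite cardAB; apply: leq_trans (card_extend sWU sBW) _.
  exact: greedy_cost_bound cardST cardU cardW cardB.
Qed.

Lemma greedy_reach k : d * k + r * k <= #|S| ->
  exists T A, greedy_inv T A /\ #|A| = d * k.
Proof.
move=> cardS.
suff reach m T A : greedy_inv T A -> #|A| <= d * k -> d * k - #|A| <= m ->
    exists T' A', greedy_inv T' A' /\ #|A'| = d * k.
  by apply: (reach (d * k) _ _ greedy_inv0); rewrite cards0 ?subn0.
elim: m T A => [|m IH] T A invTA leAN.
  rewrite leqn0 subn_eq0 => geAN; exists T, A; split => //.
  by apply/eqP; rewrite eqn_leq leAN.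
move=> leNAm; have [ltAN|geAN] := ltnP #|A| (d * k); last first.
  by exists T, A; split => //; apply/eqP; rewrite eqn_leq leAN.
have ltqk : #|A| %/ d < k by rewrite ltn_divLR // mulnC.
have notST : ~~ (S \subset T).
  case: invTA => _ _ cardST; apply/negP => /setIidPl sST.
  rewrite sST in cardST; have := leq_add ltAN (leq_mul (leqnn r) (ltnW ltqk)).
  rewrite addSn => /(leq_ltn_trans cardST)/leq_trans/(_ cardS).
  by rewrite ltnn.
have [T' [A' [invTA' ltAA' leA'q]]] := greedy_step invTA notST.
apply: IH invTA' _ _.
  by apply: leq_trans leA'q _; rewrite mulnC leq_mul2l ltqk orbT.
by move: leNAm ltAA'; clear; lia.
Qed.

End Greedy.

Theorem mainTheorem2 (F : finFieldType) (n r delta : nat)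
  (C : {set word F n}) (S : {set 'I_n}) (Delta : nat) :
  1 <= r -> 2 <= delta -> has_locality C r delta ->
  0 < Delta -> Delta <= #|S| ->
  exists A T : {set 'I_n},
    [/\ A \subset S :&: T,
        #|A| = (delta - 1) * (Delta %/ (r + delta - 1)),
        #|S :&: T| <= Delta &
        exists psi : word F n -> word F n,
          forall c, c \in C -> restr T c = psi (restr (T :\: A) c)].
Proof.
case: delta => [|d] // _ d_gt0 loc _ cardS.
rewrite addnS !subn1 /=; set k := Delta %/ (r + d).
have cardkD : d * k + r * k <= Delta by rewrite -mulnDl addnC mulnC leq_divM.
have [T [A [[sAST detT cardST] cardA]]] :=
  greedy_reach d_gt0 loc (leq_trans cardkD cardS).
exists A, T; split => //; last exact: determines_restr detT.
rewrite cardA mulKn // in cardST.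
exact: leq_trans cardST cardkD.
Qed.
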